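(* Fix $\lambda\in[0,1)$, $N\ge1$ and $p\in(0,1]$. Let $(\mathbf{V}^{N,p}[n])_{n\ge0}$ and $(\mathbf{V}^{N,0}[n])_{n\ge0}$ be the embedded discrete-time chains of the $N$-station systems with centralization parameters $p$ and $0$, respectively. If $\mathbf{V}^{N,p}[0]=\mathbf{V}^{N,0}[0]$, then $(\mathbf{V}^{N,p}_1[n])_{n\ge0}$ is stochastically dominated by $(\mathbf{V}^{N,0}_1[n])_{n\ge0}$.
   Context: The $N$-station system with parameter $q\in[0,1]$: station $n\in\{1,\dots,N\}$ has queue length $Q_n(t)\in\mathbb{Z}_+$. Tasks arrive to each station according to independent Poisson processes of rate $\lambda$. Each station has an independent Poisson clock of rate $1-q$: at a tick, if $Q_n>0$ one task leaves station $n$, otherwise nothing happens. An independent central Poisson clock of rate $Nq$: at a tick, if $\sum_nQ_n>0$ one task leaves a station chosen uniformly at random among stations with a longest queue, otherwise nothing happens. $\mathbf{V}^{N,q}_i(t)=\sum_{j\ge i}\frac1N\sum_n\mathbb{I}\{Q_n(t)\ge j\}$. The events (arrivals and ticks of all clocks, including ticks that remove no task) form a Poisson process of total rate $N(1+\lambda)$; with $t_0=0$ and $t_n$ the time of the $n$-th event, $\mathbf{V}^{N,q}[n]=\mathbf{V}^{N,q}(t_n)$. A discrete-time process $(X[n])_{n\ge0}$ is stochastically dominated by $(Y[n])_{n\ge0}$ if there exist processes $X',Y'$ on a common probability space with the same distributions as $X,Y$ respectively and $X'[n]\le Y'[n]$ for all $n\ge0$ almost surely. *)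

From HB Require Import structures.
From mathcomp Require Import all_boot all_order all_algebra.
From mathcomp Require Import all_classical all_reals all_analysis.
Set Implicit Arguments. Unset Strict Implicit. Unset Printing Implicit Defensive.
Import Order.TTheory GRing.Theory Num.Theory.
Local Open Scope ring_scope.
Local Open Scope classical_set_scope.

(* A configuration of the N-station system: queue lengths Q_n, n : 'I_N. *)
Definition config (N : nat) := {ffun 'I_N -> nat}.

Section System.
Variables (R : realType) (N : nat) (lam q : R).

Definition arr (n : 'I_N) (Q : config N) : config N :=
  [ffun m => if m == n then (Q m).+1 else Q m].
(* one task leaves station n if Q_n > 0, otherwise nothing happens
   (truncated subtraction) *)
Definition dep (n : 'I_N) (Q : config N) : config N :=
  [ffun m => if m == n then (Q m).-1 else Q m].

Definition maxQ (Q : config N) : nat := \max_(m : 'I_N) Q m.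
Definition longest (Q : config N) : {set 'I_N} := [set m | Q m == maxQ Q].

(* Transition probabilities of the embedded discrete-time chain: each event
   of the Poisson process of total rate N(1+lam) is
   - an arrival at station n          w.p. lam / (N(1+lam)),
   - a tick of the clock of station n w.p. (1-q) / (N(1+lam)),
   - a tick of the central clock      w.p. Nq / (N(1+lam)); then a task leaves
     a station chosen uniformly among the longest queues if sum Q > 0,
     otherwise nothing happens. *)
Definition central (Q Q' : config N) : R :=
  if \sum_(m : 'I_N) Q m == 0%N then (Q' == Q)%:R
  else \sum_(m in longest Q) (Q' == dep m Q)%:R / #|longest Q|%:R.

Definition trans (Q Q' : config N) : R :=
  \sum_(m : 'I_N) (lam / (N%:R * (1 + lam))) * (Q' == arr m Q)%:R
  + \sum_(m : 'I_N) ((1 - q) / (N%:R * (1 + lam))) * (Q' == dep m Q)%:R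
  + (N%:R * q / (N%:R * (1 + lam))) * central Q Q'.

Fixpoint path_prob (x : config N) (t : seq (config N)) : R :=
  if t is y :: t' then trans x y * path_prob y t' else 1.

(* probability that the embedded chain started at Q0 follows the
   finite path s = [:: Q[0]; ...; Q[k]] *)
Definition chain_prob (Q0 : config N) (s : seq (config N)) : R :=
  if s is x :: t then (x == Q0)%:R * path_prob x t else 0.

(* V_i(Q) = sum_{j >= i} (1/N) sum_n I{Q_n >= j}  (for i >= 1; the sum over j
   is finite: only j <= Q_n contribute) *)
Definition V (i : nat) (Q : config N) : R :=
  \sum_(m : 'I_N) \sum_(i <= j < (Q m).+1) N%:R^-1.

(* finite-dimensional distributions of (V_1[n])_n for the chain from Q0:
   P(V_1[0] = v_0, ..., V_1[k] = v_k) *)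
Definition V1_fdd (Q0 : config N) (v : seq R) : \bar R :=
  \esum_(s in [set s : seq (config N) | map (V 1) s = v]) (chain_prob Q0 s)%:E.
End System.

(* For processes with values in a countable set (as here) this determines
   the law of the process. *)
Definition has_fdd (R : realType) (d : measure_display) (Omega : measurableType d)
  (P : probability Omega R) (X : Omega -> nat -> R) (mu : seq R -> \bar R) :=
  (forall n, measurable_fun setT (fun w => X w n)) /\
  forall v : seq R, v != [::] ->
    P [set w : Omega | [seq X w k | k <- iota 0 (size v)] = v] = mu v.

Definition stoch_dominated (R : realType) (muX muY : seq R -> \bar R) : Prop :=
  exists (d : measure_display) (Omega : measurableType d)
         (P : probability Omega R) (X Y : Omega -> nat -> R),
    has_fdd P X muX /\ has_fdd P Y muY /\
    P [set w : Omega | forall n, X w n <= Y w n] = 1%E.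

From HB Require Import structures.
From mathcomp Require Import all_boot all_order all_algebra fingroup perm zify ring.
From mathcomp Require Import all_classical all_reals all_analysis.

Set Implicit Arguments.
Unset Strict Implicit.
Unset Printing Implicit Defensive.
Import Order.TTheory GRing.Theory Num.Theory.

(* Both systems are driven by one uniform variable on [0, 1[: at each step the
   current interval is cut into consecutive pieces whose lengths are the
   transition probabilities, and the piece containing the variable is the next
   state.  The moves are coupled so that arrivals and individual clock ticks
   happen at stations of equal rank in the two systems (the k-th longest queue
   of one with the k-th longest queue of the other), while the central clock of
   the system with parameter p is matched with a share p of the individual
   clocks of the system with parameter 0.  Each coupled move preserves the weak
   submajorization sum_n (Q_n - c)^+ <= sum_n (Q'_n - c)^+ for every c, that is
   V_i <= V'_i for all i >= 1; each marginal of the coupled chain is the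
   embedded chain of the corresponding system, so the case i = 1 gives the
   domination. *)

Lemma ltn_sum (I : finType) (F G : I -> nat) i :
  (forall j, F j <= G j) -> F i < G i -> \sum_j F j < \sum_j G j.
Proof.
move=> leFG ltFGi; rewrite (bigD1 i) //= [X in _ < X](bigD1 i) //= -addSn.
by rewrite leq_add // leq_sum.
Qed.

Section Ranking.
Variables (I : finType) (f : I -> nat).

Definition before (i j : I) : bool :=
  (f j < f i) || (f i == f j) && (enum_rank i < enum_rank j).

Lemma before_irr i : before i i = false.
Proof. by rewrite /before !ltnn eqxx. Qed.

Lemma before_trans j i k : before i j -> before j k -> before i k.
Proof.
rewrite /before => /orP[lt_ji|/andP[/eqP eq_ij lt_ij]].
  by case/orP=> [/ltn_trans->|/andP[/eqP<- _]]; rewrite ?lt_ji.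
rewrite eq_ij; case/orP=> [->//|/andP[/eqP-> lt_jk]].
by rewrite eqxx (ltn_trans lt_ij lt_jk) orbT.
Qed.

Lemma before_total i j : i != j -> before i j || before j i.
Proof.
move=> neq_ij; rewrite /before; case: ltngtP => //= _.
case: ltngtP => // /val_inj/enum_rank_inj eq_ij.
by rewrite eq_ij eqxx in neq_ij.
Qed.

Definition rank (j : I) : nat := #|[set i | before i j]|.

Lemma rank_before i j : before i j -> rank i < rank j.
Proof.
move=> bij; apply: proper_card; apply/properP; split.
  by apply/fintype.subsetP => k; rewrite !inE => /before_trans; apply.
by exists i; rewrite !inE ?before_irr.
Qed.

Lemma rank_lt_card j : rank j < #|I|.
Proof.
apply: proper_card; apply/properP; split; first exact: subset_predT.
by exists j => //; rewrite inE before_irr.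
Qed.

Lemma rank_inj : injective rank.
Proof.
move=> i j eq_rk; apply/eqP; apply: contraT => /before_total.
by case/orP=> /rank_before; rewrite eq_rk ltnn.
Qed.

Lemma rank_lt_ge i j : rank i < rank j -> f j <= f i.
Proof.
move=> lt_rk; rewrite leqNgt; apply/negP => lt_ij.
have /rank_before : before j i by rewrite /before lt_ij.
by rewrite ltnNge (ltnW lt_rk).
Qed.

Definition rank_ord (j : I) : 'I_#|I| := Ordinal (rank_lt_card j).

Lemma rank_ord_inj : injective rank_ord.
Proof. by move=> i j /(congr1 val)/rank_inj. Qed.

Definition rank_perm : {perm I} := perm (inj_comp (@enum_val_inj _ _) rank_ord_inj).

Lemma rank_permE j : rank_perm j = enum_val (rank_ord j).
Proof. exact: permE. Qed.

End Ranking.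

(* Sends the element of rank r for [a] to the element of rank r for [b]. *)
Definition comatch (I : finType) (a b : I -> nat) : {perm I} :=
  (rank_perm a * (rank_perm b)^-1)%g.

Lemma rank_comatch (I : finType) (a b : I -> nat) i :
  rank b (comatch a b i) = rank a i.
Proof.
have /enum_val_inj/(congr1 val) // :
  enum_val (rank_ord b (comatch a b i)) = enum_val (rank_ord a i).
by rewrite -!rank_permE permM permKV.
Qed.

Lemma comatch_mono (I : finType) (a b : I -> nat) i j :
  a i < a j -> b (comatch a b i) <= b (comatch a b j).
Proof.
move=> lt_aij; apply: rank_lt_ge; rewrite !rank_comatch.
by apply: rank_before; rewrite /before lt_aij.
Qed.

Section Excess.
Variable N : nat.
Implicit Types (a b : config N) (c : nat) (n : 'I_N).

(* [excess a c] is N V_{c+1}(a). *)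
Definition excess a c : nat := \sum_m (a m - c).
Definition count_above a c : nat := \sum_m (c < a m).
Definition submajorized a b : Prop := forall c, excess a c <= excess b c.

Lemma excessS a c : excess a c = excess a c.+1 + count_above a c.
Proof. by rewrite -big_split; apply: eq_bigr => m _; case: ltnP => /= ?; lia. Qed.

Lemma excess_arr a n c : excess (arr n a) c = excess a c + (c <= a n).
Proof.
rewrite /excess (bigD1 n) //= [in RHS](bigD1 n) //= ffunE eqxx.
under eq_bigr => m /negbTE neq_mn do rewrite ffunE neq_mn.
by case: leqP => ?; lia.
Qed.

Lemma excess_dep a n c : excess (dep n a) c = excess a c - (c < a n).
Proof.
rewrite /excess (bigD1 n) //= [in RHS](bigD1 n) //= ffunE eqxx.
under eq_bigr => m /negbTE neq_mn do rewrite ffunE neq_mn.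
by case: ltnP => ?; lia.
Qed.

Lemma leq_excess a n c : a n - c <= excess a c.
Proof. by rewrite /excess (bigD1 n) //= leq_addr. Qed.

Lemma count_above_perm a (s : {perm 'I_N}) c :
  count_above a c = \sum_m (c < a (s m)).
Proof. by rewrite /count_above (reindex_inj (@perm_inj _ s)). Qed.

Lemma submajorized_arr a b n : submajorized a b ->
  submajorized (arr n a) (arr (comatch a b n) b).
Proof.
move=> ab c; rewrite !excess_arr.
case: (leqP c (a n)) => [le_c_an|_]; last by rewrite addn0 (leq_trans (ab c)) ?leq_addr.
case: (leqP c (b _)) => [_|lt_bn_c]; first by rewrite leq_add2r.
rewrite addn0 addn1; case: c le_c_an lt_bn_c ab => // c lt_c_an /ltnSE le_bn_c ab.
suff : count_above b c < count_above a c.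
  by have := ab c; rewrite (excessS a c) (excessS b c); lia.
rewrite (count_above_perm b (comatch a b)) /count_above.
apply: (@ltn_sum _ (fun m => c < b (comatch a b m)) (fun m => c < a m) n).
  move=> m; case: (ltnP c (b _)) => // lt_c_bm; rewrite lt0b.
  rewrite (leq_trans lt_c_an) // leqNgt; apply: contraTN lt_c_bm.
  by move=> /(comatch_mono b) le_b; rewrite -leqNgt (leq_trans le_b).
by rewrite lt_c_an [c < b _]ltnNge le_bn_c.
Qed.

Lemma submajorized_dep a b n : submajorized a b ->
  submajorized (dep n a) (dep (comatch a b n) b).
Proof.
move=> ab c; rewrite !excess_dep.
case: (ltnP c (b _)) => [lt_c_bn|_]; last by rewrite subn0 (leq_trans _ (ab c)) ?leq_subr.
case: (ltnP c (a n)) => [_|le_an_c]; first by rewrite leq_sub2r.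
rewrite subn0; suff : count_above a c < count_above b c.
  by have := ab c.+1; rewrite (excessS a c) (excessS b c); lia.
rewrite (count_above_perm b (comatch a b)) /count_above.
apply: (@ltn_sum _ (fun m => c < a m) (fun m => c < b (comatch a b m)) n).
  move=> m; case: (ltnP c (a m)) => // lt_c_am; rewrite lt0b.
  by rewrite (leq_trans lt_c_bn) // comatch_mono // (leq_ltn_trans le_an_c).
by rewrite lt_c_bn [c < a n]ltnNge le_an_c.
Qed.

Lemma submajorized_empty a b : \sum_m a m = 0 -> submajorized a b.
Proof.
move=> a0 c; suff -> : excess a c = 0 by [].
by apply/eqP; rewrite -leqn0 -a0 leq_sum // => m _; rewrite leq_subr.
Qed.

Lemma submajorized_dep_longest a b m n : m \in longest a ->
  submajorized a b -> submajorized (dep m a) (dep n b).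
Proof.
rewrite inE => /eqP max_am ab c; rewrite !excess_dep.
case: (ltnP c (a m)) => [lt_c_am|le_am_c].
  have := leq_excess b n c; have := ab c; case: (c < b n) => /=; lia.
suff -> : excess a c = 0 by [].
rewrite /excess big1 // => i _; apply/eqP; rewrite subn_eq0.
by apply: leq_trans le_am_c; rewrite max_am; apply: leq_bigmax.
Qed.
End Excess.

Local Open Scope ring_scope.
Local Open Scope classical_set_scope.

Lemma V_excess (R : realType) N (a : config N) c : V R c.+1 a = (excess a c)%:R / N%:R.
Proof.
rewrite /V /excess natr_sum mulr_suml; apply: eq_bigr => m _.
by rewrite sumr_const_nat subSS mulr_natl.
Qed.

Lemma submajorizedP (R : realType) N (a b : config N) : (0 < N)%N ->
  submajorized a b <-> forall i, (1 <= i)%N -> V R i a <= V R i b.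
Proof.
move=> N_gt0; have N_inv_gt0 : 0 < N%:R^-1 :> R by rewrite invr_gt0 ltr0n.
split=> [ab [//|c] _|Vab c]; first by rewrite !V_excess ler_pM2r // ler_nat.
by have := Vab c.+1 isT; rewrite !V_excess ler_pM2r // ler_nat.
Qed.

Lemma uniform01E (R : realType) (A : set R) : measurable A ->
  uniform_prob (@ltr01 R) A = lebesgue_measure (`[0, 1[ `&` A).
Proof.
move=> mA; rewrite /uniform_prob integral_uniform_pdf.
have mA01 : measurable (A `&` `[0, 1]) by apply: measurableI => //; exact: measurable_itv.
rewrite (eq_integral (fun=> 1%:E)); last first.
  by move=> u; rewrite inE => -[_]; rewrite /uniform_pdf /= in_itv /= => ->; rewrite subr0 invr1.
rewrite integral_cst // mul1e setIC.
have -> : `[0, 1] `&` A = (`[0, 1[ `&` A) `|` ([set 1] `&` A).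
  by rewrite -setIUl setUitv1 // bnd_simp.
rewrite measureU0 //.
- by apply: measurableI => //; exact: measurable_itv.
- exact: measurableI.
- apply: (@subset_measure0 _ _ _ lebesgue_measure _ [set (1 : R)]).
  + exact: measurableI.
  + exact: measurable_set1.
  + by move=> u [].
  + exact: lebesgue_measure_set1.
Qed.

Section Sampler.
Variables (R : realType) (S : eqType).
Local Notation mu := (@lebesgue_measure R).

(* A cell [(x, lo, w)] is the state [x] together with the interval [lo, lo + w[
   of values of the driving uniform variable that lead to it. *)
Definition cell := (S * R * R)%type.

Definition cell_itv (c : cell) : set R := `[c.1.2, c.1.2 + c.2[.

(* Splits [lo, lo + w[ into consecutive pieces of lengths [w * e.1] for the
   weighted moves [e] of [es] and returns the piece containing [u]; the last
   piece absorbs every [u] beyond the earlier ones. *)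
Fixpoint select (x : S) (es : seq (R * S)) (lo w u : R) : cell :=
  match es with
  | [::] => (x, lo, 0)
  | e :: es' =>
    if (es' == [::]) || (u < lo + w * e.1) then (e.2, lo, w * e.1)
    else select x es' (lo + w * e.1) w u
  end.

Fixpoint pieces (es : seq (R * S)) (lo w : R) : seq cell :=
  if es is e :: es' then (e.2, lo, w * e.1) :: pieces es' (lo + w * e.1) w
  else [::].

Lemma measurable_ltr (a : R) : measurable [set u : R | u < a].
Proof.
have -> : [set u : R | u < a] = `]-oo, a[ by apply/seteqP; split=> u /=; rewrite in_itv.
exact: measurable_itv.
Qed.

Lemma measurable_select (H : cell -> set R) x es lo w :
  (forall c, measurable (H c)) -> measurable [set u | H (select x es lo w u) u].
Proof.
move=> mH; elim: es lo => [|e es IH] lo /=; first exact: mH.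
case: eqP => _ /=; first exact: mH.
set lt_e := [set u | u < lo + w * e.1].
have -> : [set u | H (if u < lo + w * e.1 then (e.2, lo, w * e.1)
                      else select x es (lo + w * e.1) w u) u] =
    (lt_e `&` H (e.2, lo, w * e.1)) `|`
    (~` lt_e `&` [set u | H (select x es (lo + w * e.1) w u) u]).
  apply/seteqP; split=> u; rewrite /lt_e /=; case: ifPn => [lt_u|/negP ge_u].
  - by left.
  - by right.
  - by case=> -[].
  - by case=> -[].
have mlt_e : measurable lt_e by exact: measurable_ltr.
by apply: measurableU; apply: measurableI => //; exact: measurableC.
Qed.

Lemma measure_select (H : cell -> set R) x es lo w :
  (forall c, measurable (H c)) -> 0 <= w -> all (fun e => 0 <= e.1) es ->
  mu (`[lo, lo + w * \sum_(e <- es) e.1[ `&` [set u | H (select x es lo w u) u]) =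
  (\sum_(c <- pieces es lo w) mu (cell_itv c `&` H c))%E.
Proof.
move=> mH w_ge0; elim: es lo => [|e es IH] lo /=.
  by rewrite !big_nil mulr0 addr0 set_itvco0 set0I measure0.
case/andP=> e_ge0 es_ge0; rewrite big_cons.
case: eqP => [->|_] /=; first by rewrite !big_seq1 big_nil addr0.
rewrite big_cons /=.
set m := lo + w * e.1; set s := \sum_(e <- es) e.1.
have s_ge0 : 0 <= s by rewrite /s big_seq sumr_ge0 // => f /(allP es_ge0).
have split_itv : `[lo, lo + w * (e.1 + s)[ `&`
      [set u | H (if u < m then (e.2, lo, w * e.1) else select x es m w u) u] =
    (`[lo, m[ `&` H (e.2, lo, w * e.1)) `|` (`[m, m + w * s[ `&` [set u | H (select x es m w u) u]).
  have le_lo_m : lo <= m by rewrite lerDl mulr_ge0.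
  rewrite mulrDr addrA -/m; apply/seteqP; split=> u /=; rewrite !in_itv /=.
  - case: ifPn => [_|ge_um] [/andP[le_lo_u lt_u] Hu]; first by left; rewrite le_lo_u.
    by right; rewrite leNgt ge_um lt_u.
  - case=> -[/andP[ge_u lt_u] Hu].
      by rewrite ge_u lt_u (lt_le_trans lt_u) // lerDl mulr_ge0.
    by rewrite [u < m]ltNge ge_u (le_trans le_lo_m ge_u) lt_u.
rewrite split_itv measureU; first by rewrite -IH.
- by apply: measurableI; [exact: measurable_itv|exact: mH].
- by apply: measurableI; [exact: measurable_itv|exact: measurable_select].
- apply/seteqP; split=> // u [[+ _] [+ _]]; rewrite /mkset !in_itv /=.
  by move=> /andP[_ lt_um] /andP[le_mu _]; have := lt_le_trans lt_um le_mu; rewrite ltxx.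
Qed.

Lemma pieces_width_ge0 es lo w : 0 <= w -> all (fun e => 0 <= e.1) es ->
  all (fun c : cell => 0 <= c.2) (pieces es lo w).
Proof.
move=> w_ge0; elim: es lo => [|e es IH] lo //= /andP[e_ge0 es_ge0].
by rewrite mulr_ge0 // IH.
Qed.

Lemma big_pieces (F : S -> R -> R) es lo w :
  \sum_(c <- pieces es lo w) F c.1.1 c.2 = \sum_(e <- es) F e.2 (w * e.1).
Proof. by elim: es lo => [|e es IH] lo /=; rewrite ?big_nil // !big_cons IH. Qed.

Lemma select_state x es lo w u : es != [::] ->
  (select x es lo w u).1.1 \in [seq e.2 | e <- es].
Proof.
elim: es lo => [|e es IH] lo //= _; rewrite in_cons.
case: ifP => [_|/norP[nes _]]; first by rewrite eqxx.
by rewrite IH ?orbT.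
Qed.

Variable moves : S -> seq (R * S).
Hypothesis moves_ge0 : forall x, all (fun e => 0 <= e.1) (moves x).
Hypothesis moves_sum1 : forall x, \sum_(e <- moves x) e.1 = 1.

Definition advance (u : R) (c : cell) : cell := select c.1.1 (moves c.1.1) c.1.2 c.2 u.
Definition sample (c0 : cell) (n : nat) (u : R) : cell := iter n (advance u) c0.

Definition offspring (c : cell) : seq cell := pieces (moves c.1.1) c.1.2 c.2.
Definition generation (c0 : cell) (n : nat) : seq cell :=
  iter n (fun cs => flatten (map offspring cs)) [:: c0].

Lemma generation_width_ge0 c0 n : 0 <= c0.2 -> all (fun c : cell => 0 <= c.2) (generation c0 n).
Proof.
move=> c0_ge0; elim: n => [|n IH] /=; first by rewrite c0_ge0.
apply/allP => c' /flattenP[_ /mapP[c /(allP IH) c_ge0 ->]]; apply/allP: c'.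
exact: pieces_width_ge0.
Qed.

Lemma measurable_sample (H : cell -> set R) c0 n :
  (forall c, measurable (H c)) -> measurable [set u | H (sample c0 n u) u].
Proof.
elim: n H => [|n IH] H mH; first exact: mH.
by apply: (IH (fun c u => H (advance u c) u)) => c; exact: measurable_select.
Qed.

Lemma measure_sample (H : cell -> set R) c0 n :
  (forall c, measurable (H c)) -> 0 <= c0.2 ->
  mu (cell_itv c0 `&` [set u | H (sample c0 n u) u]) =
  (\sum_(c <- generation c0 n) mu (cell_itv c `&` H c))%E.
Proof.
move=> mH c0_ge0; elim: n H mH => [|n IH] H mH /=; first by rewrite big_seq1.
rewrite (IH (fun c u => H (advance u c) u)); last by move=> c; exact: measurable_select.
rewrite big_flatten big_map; apply: eq_big_seq => c /(allP (generation_width_ge0 n c0_ge0)) c_ge0.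
have -> : cell_itv c = `[c.1.2, c.1.2 + c.2 * \sum_(e <- moves c.1.1) e.1[.
  by rewrite moves_sum1 mulr1.
exact: measure_select.
Qed.

Lemma measurable_fun_sample d (T : measurableType d) (f : S -> T) c0 n :
  measurable_fun setT (fun u => f (sample c0 n u).1.1).
Proof.
move=> _ B mB; rewrite setTI.
have mH (c : cell) : measurable (cst (f c.1.1) @^-1` B : set R).
  by rewrite preimage_cst; case: ifP.
exact: (measurable_sample c0 n mH).
Qed.

Lemma measure_cell_itv (c : cell) : 0 <= c.2 -> mu (cell_itv c) = c.2%:E.
Proof.
case: c => [[x lo] w] /=; rewrite /cell_itv /= le_eqVlt => /predU1P[<-|w_gt0].
  by rewrite addr0 set_itvco0 measure0.
by rewrite lebesgue_measure_itv /= lte_fin ltrDl w_gt0 -EFinD addrAC subrr add0r.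
Qed.

Lemma prob_sample (g : S -> bool) x n :
  uniform_prob (@ltr01 R) [set u | g (sample (x, 0, 1) n u).1.1] =
  \sum_(c <- generation (x, 0, 1) n) (c.2 * (g c.1.1)%:R)%:E.
Proof.
have g_set (c : cell) : [set _ : R | g c.1.1] = if g c.1.1 then setT else set0.
  by case: (g _); apply/seteqP; split.
have mg (c : cell) : measurable [set _ : R | g c.1.1] by rewrite g_set; case: ifP.
rewrite uniform01E; last exact: (measurable_sample _ _ mg).
have := @measure_sample _ (x, 0%R, 1%R) n mg ler01; rewrite /cell_itv /= add0r => ->.
have /allP width_ge0 := @generation_width_ge0 (x, 0%R, 1%R) n ler01.
apply: eq_big_seq => c /width_ge0 c_ge0.
rewrite g_set; case: (g c.1.1); last by rewrite setI0 measure0 mulr0.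
by rewrite setIT mulr1 measure_cell_itv.
Qed.
End Sampler.

Section Coupling.
Variables (R : realType) (N : nat) (lam p : R).
Hypotheses (lam_ge0 : 0 <= lam) (N_gt0 : (0 < N)%N) (p_ge0 : 0 <= p) (p_le1 : p <= 1).
Local Notation C := (config N).
Implicit Types (a b : C) (x : C * C).

Definition event_rate : R := N%:R * (1 + lam).

Lemma event_rate_gt0 : 0 < event_rate.
Proof. by rewrite mulr_gt0 ?ltr0n // ltr_pwDl. Qed.

(* A tick of the central clock of the first system, coupled with the share [p]
   of the clock of station [n] of the second one. *)
Definition central_moves (a b : C) (n : 'I_N) : seq (R * (C * C)) :=
  if (\sum_m a m == 0)%N then [:: (p / event_rate, (a, dep n b))]
  else [seq (p / event_rate / #|longest a|%:R, (dep m a, dep n b))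
       | m <- enum (longest a)].

(* Arrivals and clock ticks of station [n] in the first system are matched with
   those of the station of the same rank in the second one. *)
Definition coupled_moves (x : C * C) : seq (R * (C * C)) :=
  let s := comatch x.1 x.2 in
  [seq (lam / event_rate, (arr n x.1, arr (s n) x.2)) | n <- enum 'I_N] ++
  [seq ((1 - p) / event_rate, (dep n x.1, dep (s n) x.2)) | n <- enum 'I_N] ++
  flatten [seq central_moves x.1 x.2 n | n <- enum 'I_N].

Lemma big_coupled_moves (F : R * (C * C) -> R) x :
  let s := comatch x.1 x.2 in
  \sum_(e <- coupled_moves x) F e =
  \sum_n F (lam / event_rate, (arr n x.1, arr (s n) x.2)) +
  \sum_n F ((1 - p) / event_rate, (dep n x.1, dep (s n) x.2)) +
  \sum_n \sum_(e <- central_moves x.1 x.2 n) F e.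
Proof. by rewrite /= !big_cat !big_map big_flatten /= big_map !big_enum addrA. Qed.

Lemma big_central_moves (F : R * (C * C) -> R) a b n :
  \sum_(e <- central_moves a b n) F e =
  if (\sum_m a m == 0)%N then F (p / event_rate, (a, dep n b))
  else \sum_(m in longest a) F (p / event_rate / #|longest a|%:R, (dep m a, dep n b)).
Proof. by rewrite /central_moves; case: ifP; rewrite ?big_seq1 // big_map big_enum. Qed.

Lemma longest_card_gt0 a : (0 < #|longest a|)%N.
Proof.
have /(bigop.eq_bigmax (fun i => a i))[m max_m] : (0 < #|'I_N|)%N by rewrite card_ord.
by apply/card_gt0P; exists m; rewrite inE /maxQ max_m.
Qed.

Lemma sum_longest_const a (r : R) : \sum_(m in longest a) r / #|longest a|%:R = r.
Proof.
by rewrite sumr_const -[(r / _) *+ _]mulr_natr mulfVK // pnatr_eq0 -lt0n longest_card_gt0.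
Qed.

Lemma coupled_moves_sum1 x : \sum_(e <- coupled_moves x) e.1 = 1.
Proof.
rewrite big_coupled_moves /=.
under [X in _ + _ + X]eq_bigr => n _ do
  rewrite big_central_moves /= (fun_if id) sum_longest_const if_same.
rewrite !sumr_const card_ord -!(mulr_natl (_ / event_rate)) -!mulrDr -!mulrDl.
have -> : lam + (1 - p) + p = 1 + lam by ring.
by rewrite mulrA mulfV // gt_eqF // event_rate_gt0.
Qed.

Lemma central_moves_fst a b n a' :
  \sum_(e <- central_moves a b n) e.1 * (e.2.1 == a')%:R = p / event_rate * central R a a'.
Proof.
rewrite big_central_moves /central /=; case: ifP => _; first by rewrite eq_sym.
by rewrite mulr_sumr; apply: eq_bigr => m _; rewrite eq_sym /=; ring.
Qed.

Lemma coupled_moves_fst x a' :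
  \sum_(e <- coupled_moves x) e.1 * (e.2.1 == a')%:R = trans lam p x.1 a'.
Proof.
rewrite big_coupled_moves /trans -/event_rate /=.
under [X in _ + _ + X]eq_bigr => n _ do rewrite central_moves_fst.
congr (_ + _ + _); try by apply: eq_bigr => n _; rewrite eq_sym.
by rewrite sumr_const card_ord -(mulr_natl (_ * _)) /event_rate; ring.
Qed.

Lemma central_moves_snd a b n b' :
  \sum_(e <- central_moves a b n) e.1 * (e.2.2 == b')%:R = p / event_rate * (dep n b == b')%:R.
Proof.
rewrite big_central_moves /=; case: ifP => _ //.
by under eq_bigr do rewrite mulrAC; rewrite sum_longest_const.
Qed.

Lemma coupled_moves_snd x b' :
  \sum_(e <- coupled_moves x) e.1 * (e.2.2 == b')%:R = trans lam 0 x.2 b'.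
Proof.
rewrite big_coupled_moves /=.
under [X in _ + _ + X]eq_bigr => n _ do rewrite central_moves_snd.
set s := comatch x.1 x.2.
have reindex_s (f : 'I_N -> R) : \sum_n f (s n) = \sum_n f n.
  by rewrite [RHS](reindex_inj (@perm_inj _ s)).
rewrite (reindex_s (fun n => lam / event_rate * (arr n x.2 == b')%:R)).
rewrite (reindex_s (fun n => (1 - p) / event_rate * (dep n x.2 == b')%:R)).
rewrite /trans -/event_rate mulr0 !mul0r addr0 -addrA -big_split /=.
by congr (_ + _); apply: eq_bigr => n _; rewrite eq_sym //; ring.
Qed.

Lemma coupled_moves_cases (P : R * (C * C) -> Prop) x :
  let s := comatch x.1 x.2 in
  (forall n, P (lam / event_rate, (arr n x.1, arr (s n) x.2))) ->
  (forall n, P ((1 - p) / event_rate, (dep n x.1, dep (s n) x.2))) ->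
  ((\sum_m x.1 m = 0)%N -> forall n, P (p / event_rate, (x.1, dep n x.2))) ->
  (forall m n, m \in longest x.1 ->
     P (p / event_rate / #|longest x.1|%:R, (dep m x.1, dep n x.2))) ->
  forall e, e \in coupled_moves x -> P e.
Proof.
move=> s Parr Pdep Pempty Pcentral e; rewrite !mem_cat.
case/or3P=> [/mapP[n _ ->]|/mapP[n _ ->]|/flattenP[_ /mapP[n _ ->]]] //.
rewrite /central_moves; case: eqP => [/Pempty|_]; first by rewrite inE => P0 /eqP->.
by case/mapP=> m; rewrite mem_enum => m_max ->; exact: Pcentral.
Qed.

Lemma coupled_moves_ge0 x : all (fun e => 0 <= e.1) (coupled_moves x).
Proof.
have rate_inv_ge0 : 0 <= event_rate^-1 by rewrite invr_ge0 ltW // event_rate_gt0.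
apply/allP; apply: coupled_moves_cases => /= [n|n|_ n|m n _].
- by rewrite mulr_ge0.
- by rewrite mulr_ge0 // subr_ge0.
- by rewrite mulr_ge0.
- by rewrite !mulr_ge0 // invr_ge0.
Qed.

Lemma coupled_moves_submajorized x e : submajorized x.1 x.2 ->
  e \in coupled_moves x -> submajorized e.2.1 e.2.2.
Proof.
case: x => a b ab; move: e; apply: coupled_moves_cases => /= [n|n|a0 n|m n m_max].
- exact: submajorized_arr.
- exact: submajorized_dep.
- exact: submajorized_empty.
- exact: submajorized_dep_longest.
Qed.

Lemma coupled_moves_neq0 x : coupled_moves x != [::].
Proof.
set n0 := Ordinal N_gt0.
have : (lam / event_rate, (arr n0 x.1, arr (comatch x.1 x.2 n0) x.2)) \in coupled_moves x.
  by rewrite mem_cat (map_f (fun n => (_, (arr n x.1, arr _ x.2)))) ?mem_enum.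
by apply: contraTneq => ->.
Qed.
End Coupling.

Lemma path_prob_rcons (R : realType) N (lam q : R) (x : config N) t a :
  path_prob lam q x (rcons t a) = path_prob lam q x t * trans lam q (last x t) a.
Proof. by elim: t x => [|y t IH] x /=; rewrite ?mulr1 ?mul1r // IH mulrA. Qed.

Lemma chain_prob_rcons (R : realType) N (lam q : R) (Q0 : config N) s a : s != [::] ->
  chain_prob lam q Q0 (rcons s a) = chain_prob lam q Q0 s * trans lam q (last Q0 s) a.
Proof. by case: s => [|x t] // _; rewrite /= path_prob_rcons mulrA. Qed.

Lemma esum_point (R : realType) (T : choiceType) (U : eqType) (f : T -> U) v t0 (w : R) :
  0 <= w ->
  (\esum_(t in [set t | f t = v]) (w * (t0 == t)%:R)%:E = (w * (f t0 == v)%:R)%:E)%E.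
Proof.
move=> w_ge0; rewrite (esumID [set t0]); last by move=> t _; rewrite lee_fin mulr_ge0.
rewrite [X in (_ + X)%E]esum1 ?adde0; last first.
  by move=> t [_ /= neq_t]; rewrite (introF eqP (nesym neq_t)) mulr0.
have [ft0|ft0] := eqVneq (f t0) v.
  have -> : [set t | f t = v] `&` [set t0] = [set t0].
    by apply/seteqP; split=> t /=; [case|move=> ->].
  by rewrite esum_set1 ?eqxx ?ft0 // lee_fin mulr_ge0.
have -> : [set t | f t = v] `&` [set t0] = set0.
  by apply/seteqP; split=> t //= [ft t_t0]; rewrite -t_t0 ft eqxx in ft0.
by rewrite esum_set0 mulr0.
Qed.

Section Trajectory.
Variables (R : realType) (S : choiceType) (moves : S -> seq (R * S)) (s0 : S).
Hypothesis moves_ge0 : forall x, all (fun e => 0 <= e.1) (moves x).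
Hypothesis moves_sum1 : forall x, \sum_(e <- moves x) e.1 = 1.
Hypothesis moves_neq0 : forall x, moves x != [::].

(* The chain run on histories, so that a single cell determines the whole
   trajectory leading to it. *)
Definition history_moves (h : seq S) : seq (R * seq S) :=
  [seq (e.1, rcons h e.2) | e <- moves (last s0 h)].

Lemma history_moves_ge0 h : all (fun e => 0 <= e.1) (history_moves h).
Proof. by rewrite all_map; exact: moves_ge0. Qed.

Lemma history_moves_sum1 h : \sum_(e <- history_moves h) e.1 = 1.
Proof. by rewrite big_map moves_sum1. Qed.

Definition history0 : cell R (seq S) := ([:: s0], 0, 1).

Definition trajectory (u : R) (n : nat) : seq S :=
  (sample history_moves history0 n u).1.1.

Lemma trajectoryS u n : exists2 y, trajectory u n.+1 = rcons (trajectory u n) y &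
  y \in [seq e.2 | e <- moves (last s0 (trajectory u n))].
Proof.
rewrite /trajectory /= /advance; set c := sample _ _ n u.
have /select_state : history_moves c.1.1 != [::] by rewrite -size_eq0 size_map size_eq0.
rewrite -map_comp => /(_ c.1.1 c.1.2 c.2 u)/mapP[e e_in ->].
by exists e.2; rewrite ?map_f.
Qed.

Lemma trajectory_invariant (P : S -> Prop) : P s0 ->
  (forall x e, P x -> e \in moves x -> P e.2) ->
  forall u n, P (last s0 (trajectory u n)).
Proof.
move=> P0 Pmoves u; elim=> [//|n IH].
by have [y -> /mapP[e e_in ->]] := trajectoryS u n; rewrite last_rcons; exact: Pmoves e_in.
Qed.

Lemma trajectory_prefixes u n :
  trajectory u n = [seq last s0 (trajectory u j) | j <- iota 0 n.+1].
Proof.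
elim: n => [//|n IH]; have [y eq_y _] := trajectoryS u n.
have -> : iota 0 n.+2 = rcons (iota 0 n.+1) n.+1 by rewrite -cats1 -addn1 iotaD.
by rewrite map_rcons -IH eq_y last_rcons.
Qed.

Lemma map_trajectory (T : Type) (f : S -> T) u n :
  [seq f (last s0 (trajectory u j)) | j <- iota 0 n.+1] = map f (trajectory u n).
Proof. by rewrite [in RHS]trajectory_prefixes -map_comp. Qed.

Variables (N : nat) (lam q : R) (pi : S -> config N).
Hypothesis moves_marginal : forall x a,
  \sum_(e <- moves x) e.1 * (pi e.2 == a)%:R = trans lam q (pi x) a.

Lemma generation_law k s : size s = k.+1 ->
  \sum_(c <- generation history_moves history0 k) c.2 * (map pi c.1.1 == s)%:R =
  chain_prob lam q (pi s0) s.
Proof.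
elim: k s => [|k IH] s.
  by case: s => [|a [|]] //= _; rewrite big_seq1 /= mul1r mulr1 eqseq_cons andbT eq_sym.
case/lastP: s => [|s a] //; rewrite size_rcons => -[size_s].
rewrite chain_prob_rcons -?size_eq0 ?size_s // -IH // mulr_suml big_flatten /= big_map.
apply: eq_bigr => c _; rewrite /offspring.
rewrite (big_pieces (fun h w => w * (map pi h == rcons s a)%:R)) big_map /=.
under eq_bigr do rewrite map_rcons eqseq_rcons -mulnb natrM.
have [<-|neq_s] := eqVneq (map pi c.1.1) s.
  by rewrite last_map -moves_marginal mulr_sumr; apply: eq_bigr => e _ /=; ring.
by rewrite big1 ?mulr0 ?mul0r // => e _ /=; ring.
Qed.

Local Notation gen k := (generation history_moves history0 k).

Lemma history_width_ge0 k : all (fun c : cell R (seq S) => 0 <= c.2) (gen k).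
Proof. exact: (@generation_width_ge0 _ _ _ history_moves_ge0 history0 k ler01). Qed.

Lemma V1_fdd_generation v k : size v = k.+1 ->
  V1_fdd lam q (pi s0) v =
  (\sum_(c <- gen k) (c.2 * (map (V R 1 \o pi) c.1.1 == v)%:R)%:E)%E.
Proof.
move=> size_v; have /allP width_ge0 := history_width_ge0 k.
rewrite /V1_fdd (eq_esum (b := fun s =>
    (\sum_(c <- gen k | c \in gen k) (c.2 * (map pi c.1.1 == s)%:R)%:E)%E)); last first.
  by move=> s /= Vs; rewrite sumEFin -big_seq generation_law // -size_v -Vs size_map.
rewrite esum_sum; last by move=> s c _ /width_ge0 c_ge0; rewrite lee_fin mulr_ge0.
rewrite [in RHS]big_seq; apply: eq_bigr => c /width_ge0 c_ge0.
by rewrite esum_point // map_comp.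
Qed.

Lemma has_fdd_trajectory :
  has_fdd (uniform_prob (@ltr01 R)) (fun u n => V R 1 (pi (last s0 (trajectory u n))))
    (V1_fdd lam q (pi s0)).
Proof.
split=> [n|v v_neq0].
  exact: (measurable_fun_sample history_moves (fun h => V R 1 (pi (last s0 h)))).
have size_v : size v = (size v).-1.+1 by rewrite prednK // lt0n size_eq0.
have -> : [set u | [seq V R 1 (pi (last s0 (trajectory u k))) | k <- iota 0 (size v)] = v] =
    [set u | map (V R 1 \o pi) (trajectory u (size v).-1) == v].
  apply/seteqP; split=> u /=; rewrite [in iota _ _]size_v (map_trajectory (V R 1 \o pi)).
    by move=> ->.
  by move/eqP.
rewrite (V1_fdd_generation size_v).
exact: (prob_sample history_moves_ge0 history_moves_sum1 (fun h => map (V R 1 \o pi) h == v)).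
Qed.
End Trajectory.

Lemma coupled_trajectory_submajorized (R : realType) N (lam p : R) (x0 : config N * config N) u n :
  (0 < N)%N -> submajorized x0.1 x0.2 ->
  let x := last x0 (trajectory (coupled_moves lam p) x0 u n) in submajorized x.1 x.2.
Proof.
move=> N_gt0 sub0; apply: (trajectory_invariant (coupled_moves_neq0 lam p N_gt0)
  (P := fun x => submajorized x.1 x.2)) => // x e.
exact: coupled_moves_submajorized.
Qed.

Theorem lemma8 (R : realType) (lam p : R) (N : nat) (Q0p Q00 : config N) :
  0 <= lam -> lam < 1 -> (1 <= N)%N -> 0 < p -> p <= 1 ->
  (forall i : nat, (1 <= i)%N -> V R i Q0p = V R i Q00) ->
  stoch_dominated (V1_fdd lam p Q0p) (V1_fdd lam 0 Q00).
Proof.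
move=> lam_ge0 _ N_gt0 /ltW p_ge0 p_le1 eqV0.
have sub0 : submajorized Q0p Q00.
  by apply/(submajorizedP R _ _ N_gt0) => i i_gt0; rewrite eqV0.
have ge0 := coupled_moves_ge0 lam_ge0 N_gt0 p_ge0 p_le1.
have sum1 := coupled_moves_sum1 p lam_ge0 N_gt0.
have neq0 := coupled_moves_neq0 lam p N_gt0.
set s0 := (Q0p, Q00); set traj := trajectory (coupled_moves lam p) s0.
exists _, _, (uniform_prob (@ltr01 R)),
  (fun u n => V R 1 (last s0 (traj u n)).1), (fun u n => V R 1 (last s0 (traj u n)).2).
split; [|split].
- exact: (has_fdd_trajectory s0 ge0 sum1 neq0 (pi := fst) (coupled_moves_fst lam p)).
- exact: (has_fdd_trajectory s0 ge0 sum1 neq0 (pi := snd) (coupled_moves_snd lam p N_gt0)).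
have -> : [set u | forall n, V R 1 (last s0 (traj u n)).1 <= V R 1 (last s0 (traj u n)).2] = setT.
  apply/seteqP; split=> // u _ n.
  have := coupled_trajectory_submajorized (x0 := s0) lam p u n N_gt0 sub0.
  by move/(submajorizedP R _ _ N_gt0); apply.
exact: probability_setT.
Qed.
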